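(* Let $A$ be a finite field and let $S,\bar S\subseteq A$ be subsets with $\#S=\#\bar S$. Let $\psi:A\to S$ and $\bar\psi:A\to\bar S$ be surjective maps such that $\bar\psi$ is additive, i.e. $\bar\psi(x+y)=\bar\psi(x)+\bar\psi(y)$ for all $x,y\in A$. Let $u:A\to A$, $v:A\to A$ and $h:S\to\bar S$ be maps such that $\bar\psi(u(x)+v(x))=h(\psi(x))$ for all $x\in A$. Assume moreover that $\bar\psi(v(x))=0$ for every $x\in A$, and that $v$ is constant on $\psi^{-1}(s)$ for every $s\in S$. Then the map $f(x)=u(x)+v(x)$ is a permutation of $A$ if and only if $u$ is a permutation of $A$. *)

From mathcomp Require Import all_boot all_algebra all_field.
Set Implicit Arguments. Unset Strict Implicit. Unset Printing Implicit Defensive.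

(* Because psibar is additive and kills v, both f = u + v and u satisfy
   psibar (g x) = h (psi x).  If one of them is a permutation, then h maps S
   onto Sbar, hence injectively since #|S| = #|Sbar|.  So g x = g y forces
   psi x = psi y and therefore v x = v y, and then the other map also agrees
   at x and y: injectivity transfers, and on a finite field an injective map
   is a permutation. *)
From mathcomp Require Import all_boot all_algebra all_field.
Import GRing.Theory.
Set Implicit Arguments. Unset Strict Implicit.
Local Open Scope ring_scope.

Lemma imset_card_inj (T U : finType) (h : T -> U) (S : {set T}) (Sbar : {set U}) :
  h @: S = Sbar -> #|S| = #|Sbar| -> {in S &, injective h}.
Proof. by move=> hS hcard; apply/imset_injP; rewrite hS hcard. Qed.

Section FactorThroughPsi.

Variables (T U V : finType) (S Sbar : {set U}).
Variables (psi psibar : T -> U) (h : U -> U) (v : T -> V).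
Hypothesis hcard : #|S| = #|Sbar|.
Hypothesis hpsi_in : forall x, psi x \in S.
Hypothesis hh : forall s, s \in S -> h s \in Sbar.
Hypothesis hpsibar_surj : forall s, s \in Sbar -> exists x, psibar x = s.
Hypothesis hvconst : forall x y, psi x = psi y -> v x = v y.

Lemma imset_factor_eq (g : T -> T) :
  bijective g -> (forall x, psibar (g x) = h (psi x)) -> h @: S = Sbar.
Proof.
move=> [ginv gK ginvK] hg; apply/setP => y; apply/imsetP/idP.
  by move=> [s Hs ->]; apply: hh.
move=> /hpsibar_surj [z <-]; exists (psi (ginv z)) => //.
by rewrite -hg ginvK.
Qed.

Lemma factor_eq_psi (g g' : T -> T) :
  bijective g' -> (forall x, psibar (g x) = h (psi x)) ->
  (forall x, psibar (g' x) = h (psi x)) ->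
  forall x y, g x = g y -> psi x = psi y.
Proof.
move=> g'bij hg hg' x y gxy.
have hinj := imset_card_inj (imset_factor_eq g'bij hg') hcard.
by apply: hinj; rewrite ?hpsi_in // -!hg gxy.
Qed.

Lemma bijective_factor_transfer (g g' : T -> T) :
  (forall x, psibar (g x) = h (psi x)) ->
  (forall x, psibar (g' x) = h (psi x)) ->
  (forall x y, v x = v y -> g x = g y -> g' x = g' y) ->
  bijective g' -> bijective g.
Proof.
move=> hg hg' hrel g'bij; apply: injF_bij => x y gxy.
have psixy := factor_eq_psi g'bij hg hg' gxy.
by apply: (bij_inj g'bij); apply: hrel (hvconst psixy) gxy.
Qed.

End FactorThroughPsi.

Theorem mainTheorem1 (A : finFieldType) (S Sbar : {set A})
  (psi psibar u v h : A -> A)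
  (hcard : #|S| = #|Sbar|)
  (hpsi_in : forall x, psi x \in S)
  (hpsi_surj : forall s, s \in S -> exists x, psi x = s)
  (hpsibar_in : forall x, psibar x \in Sbar)
  (hpsibar_surj : forall s, s \in Sbar -> exists x, psibar x = s)
  (hpsibar_add : forall x y, psibar (x + y) = psibar x + psibar y)
  (hh : forall s, s \in S -> h s \in Sbar)
  (hcomm : forall x, psibar (u x + v x) = h (psi x))
  (hv0 : forall x, psibar (v x) = 0)
  (hvconst : forall x y, psi x = psi y -> v x = v y) :
  bijective (fun x => u x + v x) <-> bijective u.
Proof.
have hu x : psibar (u x) = h (psi x) by rewrite -hcomm hpsibar_add hv0 addr0.
have transfer := bijective_factor_transfer hcard hpsi_in hh hpsibar_surj hvconst.
split; apply: transfer => //.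
- by move=> x y -> ->.
- by move=> x y vxy /=; rewrite vxy => /addIr.
Qed.
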